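(* Let $C_s=\begin{pmatrix}0&\mathbf 1_2\\-\mathbf 1_2&0\end{pmatrix}$ and $\mathrm{Sp}(4,\mathbb Z)=\{g\in M_4(\mathbb Z): g^TC_sg=C_s\}$. Consider the integer matrices $$S_1=\begin{pmatrix}0&0&1&0\\0&1&0&0\\-1&0&0&0\\0&0&0&1\end{pmatrix},\ S_2=\begin{pmatrix}1&0&0&0\\0&0&0&1\\0&0&1&0\\0&-1&0&0\end{pmatrix},\ Q_1=\begin{pmatrix}0&-1&0&0\\1&0&0&0\\0&0&0&-1\\0&0&1&0\end{pmatrix},\ Q_2=\begin{pmatrix}0&0&0&1\\0&0&1&0\\0&-1&0&0\\-1&0&0&0\end{pmatrix},$$ $$T_1=\begin{pmatrix}1&0&1&0\\0&1&0&0\\0&0&1&0\\0&0&0&1\end{pmatrix},\ T_2=\begin{pmatrix}1&0&0&0\\0&1&0&1\\0&0&1&0\\0&0&0&1\end{pmatrix},\ T_3=\begin{pmatrix}1&0&0&1\\0&1&1&0\\0&0&1&0\\0&0&0&1\end{pmatrix},\ T_4=\begin{pmatrix}1&1&0&0\\0&1&0&0\\0&0&1&0\\0&0&-1&1\end{pmatrix},$$ $$T_5=\begin{pmatrix}1&0&0&0\\-1&1&0&0\\0&0&1&1\\0&0&0&1\end{pmatrix},\ T_6=\begin{pmatrix}1&0&0&0\\0&1&0&0\\-1&0&1&0\\0&0&0&1\end{pmatrix},\ T_7=\begin{pmatrix}1&0&0&0\\0&1&0&0\\0&-1&1&0\\-1&0&0&1\end{pmatrix},\ T_8=\begin{pmatrix}1&0&0&0\\0&1&0&0\\0&0&1&0\\0&-1&0&1\end{pmatrix}.$$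 Then all these matrices lie in $\mathrm{Sp}(4,\mathbb Z)$, and: (i) the group $\mathfrak P_{32}$ generated by $S_1,S_2,Q_1,Q_2$ is finite of order $32$; it is generated by $\mathcal A=Q_1S_1$ and $\mathcal B=Q_2^3$, which satisfy $\mathcal A^8=\mathcal B^4=(\mathcal B\mathcal A)^4=\mathbf 1_4$; (ii) the set $\{\gamma T\gamma^{-1}:\gamma\in\mathfrak P_{32},\ T\in\{T_1^{\pm1},T_2^{\pm1},T_3^{\pm1},T_4^{\pm1}\}\}$ consists of exactly $16$ matrices, namely $T_1^{\pm1},\dots,T_8^{\pm1}$; (iii) $(T_1T_6)^6=(T_2T_8)^6=(T_3T_7)^6=(T_4T_5)^6=\mathbf 1_4$; (iv) consequently, letting $\mathfrak T$ be the group generated by $T_1,\dots,T_8$ and $\Delta_{32,8}$ the subgroup of $\mathrm{Sp}(4,\mathbb Z)$ generated by $\mathfrak P_{32}$ and $\mathfrak T$, every element of $\Delta_{32,8}$ can be written as $\gamma\, t$ with $\gamma\in\mathfrak P_{32}$, $t\in\mathfrak T$, and $\mathfrak T$ is a normal subgroup of $\Delta_{32,8}$.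
   Context: $\mathrm{Sp}(4,\mathbb R)$ acts on the Siegel upper half-plane of degree 2 (complex symmetric $2\times2$ matrices $Z$ with positive definite imaginary part) by $Z\mapsto (AZ+B)(CZ+D)^{-1}$ for $g=\begin{pmatrix}A&B\\C&D\end{pmatrix}$; $T_1,\dots,T_8$ are unipotent (parabolic) and $S_1,S_2,Q_1,Q_2$ lie in the maximal compact subgroup. *)

From HB Require Import structures.
From mathcomp Require Import all_boot all_order all_algebra.
Set Implicit Arguments. Unset Strict Implicit. Unset Printing Implicit Defensive.
Import GRing.Theory Num.Theory.
Local Open Scope ring_scope.

Notation M4 := 'M[int]_4.

Definition mx4 (l : seq (seq int)) : M4 :=
  \matrix_(i < 4, j < 4) nth 0 (nth [::] l i) j.

Definition Cs : M4 :=
  mx4 [:: [:: 0; 0; 1; 0]; [:: 0; 0; 0; 1]; [:: -1; 0; 0; 0]; [:: 0; -1; 0; 0]].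

Definition inSp4Z (g : M4) : Prop := g^T *m Cs *m g = Cs.

Inductive gen (S : seq M4) : M4 -> Prop :=
| gen_one : gen S 1%:M
| gen_in g : g \in S -> gen S g
| gen_mul g h : gen S g -> gen S h -> gen S (g *m h)
| gen_inv g : gen S g -> gen S (invmx g).

Definition S1 : M4 := mx4 [:: [:: 0;0;1;0]; [:: 0;1;0;0]; [:: -1;0;0;0]; [:: 0;0;0;1]].
Definition S2 : M4 := mx4 [:: [:: 1;0;0;0]; [:: 0;0;0;1]; [:: 0;0;1;0]; [:: 0;-1;0;0]].
Definition Q1 : M4 := mx4 [:: [:: 0;-1;0;0]; [:: 1;0;0;0]; [:: 0;0;0;-1]; [:: 0;0;1;0]].
Definition Q2 : M4 := mx4 [:: [:: 0;0;0;1]; [:: 0;0;1;0]; [:: 0;-1;0;0]; [:: -1;0;0;0]].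
Definition T1 : M4 := mx4 [:: [:: 1;0;1;0]; [:: 0;1;0;0]; [:: 0;0;1;0]; [:: 0;0;0;1]].
Definition T2 : M4 := mx4 [:: [:: 1;0;0;0]; [:: 0;1;0;1]; [:: 0;0;1;0]; [:: 0;0;0;1]].
Definition T3 : M4 := mx4 [:: [:: 1;0;0;1]; [:: 0;1;1;0]; [:: 0;0;1;0]; [:: 0;0;0;1]].
Definition T4 : M4 := mx4 [:: [:: 1;1;0;0]; [:: 0;1;0;0]; [:: 0;0;1;0]; [:: 0;0;-1;1]].
Definition T5 : M4 := mx4 [:: [:: 1;0;0;0]; [:: -1;1;0;0]; [:: 0;0;1;1]; [:: 0;0;0;1]].
Definition T6 : M4 := mx4 [:: [:: 1;0;0;0]; [:: 0;1;0;0]; [:: -1;0;1;0]; [:: 0;0;0;1]].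
Definition T7 : M4 := mx4 [:: [:: 1;0;0;0]; [:: 0;1;0;0]; [:: 0;-1;1;0]; [:: -1;0;0;1]].
Definition T8 : M4 := mx4 [:: [:: 1;0;0;0]; [:: 0;1;0;0]; [:: 0;0;1;0]; [:: 0;-1;0;1]].

Definition Pgens : seq M4 := [:: S1; S2; Q1; Q2].
Definition Tgens : seq M4 := [:: T1; T2; T3; T4; T5; T6; T7; T8].
Definition Dgens : seq M4 := Pgens ++ Tgens.

Definition mA : M4 := Q1 *m S1.
Definition mB : M4 := Q2 ^+ 3.

Definition Tpm4 : seq M4 :=
  [:: T1; invmx T1; T2; invmx T2; T3; invmx T3; T4; invmx T4].
Definition Tpm8 : seq M4 :=
  [:: T1; invmx T1; T2; invmx T2; T3; invmx T3; T4; invmx T4;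
      T5; invmx T5; T6; invmx T6; T7; invmx T7; T8; invmx T8].

(* Apart from the group theory behind (iv), everything is a finite computation with explicit
   integer matrices.  For g in Sp(4,Z) we have g^-1 = Cs^T g^T Cs, so inverses are computable
   too.  The group P32 is found as the closure of 1 under right multiplication by S1, S2, Q1,
   Q2; checking that this list of 32 matrices contains 1 and is closed under products and
   inverses identifies it with the generated group, and likewise for A and B.  Conjugating
   T1^±1, ..., T4^±1 by the 32 elements gives exactly T1^±1, ..., T8^±1.  As every Ti is itself
   such a conjugate, P32 normalizes the group generated by the Ti; hence a word in the
   generators of Delta can be rewritten as gamma t, and the T-part is normal. *)

From mathcomp Require Import all_boot all_order all_algebra.
Import GRing.Theory Num.Theory.
Local Open Scope ring_scope.

Set Implicit Arguments.
Unset Strict Implicit.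
Unset Printing Implicit Defensive.

Section InverseMatrix.
Variables (R : comUnitRingType) (n : nat).
Implicit Types A B C : 'M[R]_n.

Lemma invmx_right A B : A *m B = 1%:M -> invmx A = B.
Proof.
by move=> AB1; have [uA _] := mulmx1_unit AB1; rewrite -[LHS]mulmx1 -AB1 mulKmx.
Qed.

Lemma invmx_left A B : B *m A = 1%:M -> invmx A = B.
Proof. by move=> BA1; rewrite -(invmx_right BA1) invmxK. Qed.

Lemma invmxM A B : A \in unitmx -> B \in unitmx ->
  invmx (A *m B) = invmx B *m invmx A.
Proof.
move=> uA uB; apply: invmx_right.
by rewrite mulmxA mulmxK // mulmxV.
Qed.

Lemma conjmxM A B C : A \in unitmx -> B \in unitmx ->
  (A *m B) *m C *m invmx (A *m B) = A *m (B *m C *m invmx B) *m invmx A.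
Proof. by move=> uA uB; rewrite invmxM // !mulmxA. Qed.

Lemma conjMmx A B C : A \in unitmx ->
  A *m (B *m C) *m invmx A = (A *m B *m invmx A) *m (A *m C *m invmx A).
Proof. by move=> uA; rewrite !mulmxA mulmxKV. Qed.

End InverseMatrix.

Lemma gen_unit S g : {in S, forall s, s \in unitmx} -> gen S g -> g \in unitmx.
Proof.
move=> uS; elim=> [|s /uS //|h k _ uh _ uk|h _ uh].
- exact: unitmx1.
- by rewrite unitmx_mul uh uk.
- by rewrite unitmx_inv.
Qed.

Lemma gen_conj S g t : g \in unitmx -> {in S, forall s, s \in unitmx} ->
  {in S, forall s, gen S (g *m s *m invmx g)} ->
  gen S t -> gen S (g *m t *m invmx g).
Proof.
move=> ug uS conjS; elim=> [|s /conjS //|h k _ IHh _ IHk|h gh IHh].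
- by rewrite mulmx1 mulmxV //; exact: gen_one.
- by rewrite conjMmx //; exact: gen_mul.
- have uh := gen_unit uS gh.
  suff -> : g *m invmx h *m invmx g = invmx (g *m h *m invmx g) by exact: gen_inv.
  by rewrite !invmxM ?unitmx_mul ?unitmx_inv ?ug ?uh // invmxK mulmxA.
Qed.

Definition with_inverses (S : seq M4) : seq M4 := flatten [seq [:: s; invmx s] | s <- S].

Lemma gen_with_inverses S g : g \in with_inverses S -> gen S g.
Proof.
case/flattenP=> _ /mapP[s sS ->]; rewrite !inE => /orP[] /eqP ->.
- exact: gen_in.
- by apply: gen_inv; exact: gen_in.
Qed.

Lemma mem_with_inverses S s : s \in S -> s \in with_inverses S.
Proof. by move=> sS; apply/flattenP; exists [:: s; invmx s]; rewrite ?map_f ?mem_head. Qed.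

Section NormalizedProduct.
Variables P T : seq M4.
Hypothesis unit_gens : {in P ++ T, forall s, s \in unitmx}.
Hypothesis P_normalizes_T :
  forall gam t, gen P gam -> gen T t -> gen T (gam *m t *m invmx gam).

Let unitP gam : gen P gam -> gam \in unitmx.
Proof. by apply: gen_unit => s sP; apply: unit_gens; rewrite mem_cat sP. Qed.

Let unitT t : gen T t -> t \in unitmx.
Proof. by apply: gen_unit => s sT; apply: unit_gens; rewrite mem_cat sT orbT. Qed.

Lemma gen_cat_decomp g :
  gen (P ++ T) g -> exists gam t, gen P gam /\ gen T t /\ g = gam *m t.
Proof.
elim=> [|s|h k _ [a [t [Pa [Tt ->]]]] _ [b [u [Pb [Tu ->]]]]|h _ [a [t [Pa [Tt ->]]]]].
- by exists 1%:M, 1%:M; rewrite mulmx1; do !split; exact: gen_one.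
- rewrite mem_cat => /orP[sP|sT].
  + by exists s, 1%:M; rewrite mulmx1; do !split; [exact: gen_in | exact: gen_one].
  + by exists 1%:M, s; rewrite mul1mx; do !split; [exact: gen_one | exact: gen_in].
- have ub := unitP Pb.
  exists (a *m b), (invmx b *m t *m invmx (invmx b) *m u); split; first exact: gen_mul.
  split; first by apply: gen_mul => //; apply: P_normalizes_T => //; exact: gen_inv.
  by rewrite invmxK -!mulmxA (mulmxA b) mulmxV ?mul1mx.
- have [ua ut] := (unitP Pa, unitT Tt).
  exists (invmx a), (a *m invmx t *m invmx a); split; first exact: gen_inv.
  split; first by apply: P_normalizes_T => //; exact: gen_inv.
  by rewrite invmxM // !mulmxA mulVmx ?mul1mx.
Qed.

Lemma gen_cat_normal g t :
  gen (P ++ T) g -> gen T t -> gen T (g *m t *m invmx g).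
Proof.
case/gen_cat_decomp=> a [u [Pa [Tu ->]]] Tt.
rewrite conjmxM ?(unitP Pa) ?(unitT Tu) //; apply: P_normalizes_T => //.
by apply: gen_mul; [apply: gen_mul | exact: gen_inv].
Qed.

End NormalizedProduct.

(* Matrices built with [\matrix_] are locked and do not reduce, so concrete identities are
   decided on lists of rows, which [vm_compute] evaluates, and transported along [mx4]. *)
Definition rows := seq (seq int).

Definition rent (a : rows) (i j : nat) : int := nth 0 (nth [::] a i) j.

Definition rmul (a b : rows) : rows :=
  mkseq (fun i => mkseq (fun j => rent a i 0 * rent b 0 j + rent a i 1 * rent b 1 j
    + rent a i 2 * rent b 2 j + rent a i 3 * rent b 3 j) 4) 4.

Definition rtr (a : rows) : rows := mkseq (fun i => mkseq (fun j => rent a j i) 4) 4.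

Definition rid : rows := mkseq (fun i => mkseq (fun j => (i == j)%:R) 4) 4.

Definition rpow (a : rows) (k : nat) : rows := iter k (rmul^~ a) rid.
Arguments rpow : simpl never.

Definition rows4 (a : rows) : bool := (size a == 4%N) && all (fun r => size r == 4%N) a.

Lemma mx4E a (i j : 'I_4) : mx4 a i j = rent a i j.
Proof. by rewrite mxE. Qed.

Lemma mx4_mul a b : mx4 (rmul a b) = mx4 a *m mx4 b.
Proof.
apply/matrixP=> i j; rewrite mx4E /rent !nth_mkseq //.
by rewrite mxE !big_ord_recr big_ord0 /= !mx4E add0r.
Qed.

Lemma mx4_tr a : mx4 (rtr a) = (mx4 a)^T.
Proof. by apply/matrixP=> i j; rewrite mx4E /rent !nth_mkseq // !mxE. Qed.

Lemma mx4_rid : mx4 rid = 1%:M.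
Proof. by apply/matrixP=> i j; rewrite mx4E /rent !nth_mkseq // mxE. Qed.

Lemma mx4_pow a k : mx4 (rpow a k) = mx4 a ^+ k.
Proof.
elim: k => [|k IHk]; first by rewrite mx4_rid.
by rewrite [rpow _ _]/= mx4_mul IHk exprSr.
Qed.

Lemma mx4_inj : {in rows4 &, injective mx4}.
Proof.
move=> a b /andP[/eqP sa /allP ra] /andP[/eqP sb /allP rb] eq_ab.
apply: (@eq_from_nth _ [::]) => [|i]; first by rewrite sa sb.
rewrite sa => lti4.
have /eqP sai : size (nth [::] a i) == 4%N by rewrite ra ?mem_nth ?sa.
have /eqP sbi : size (nth [::] b i) == 4%N by rewrite rb ?mem_nth ?sb.
apply: (@eq_from_nth _ 0) => [|j]; first by rewrite sai sbi.
rewrite sai => ltj4.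
by have := congr1 (fun M : M4 => M (Ordinal lti4) (Ordinal ltj4)) eq_ab; rewrite !mx4E.
Qed.

Lemma mx4_transfer a b (X Y : M4) : mx4 a = X -> mx4 b = Y -> a = b -> X = Y.
Proof. by move=> <- <- ->. Qed.

Definition mx4E_rows := (mx4_mul, mx4_pow, mx4_tr, mx4_rid).

Ltac rows_of M :=
  lazymatch M with
  | mx4 ?l => l
  | ?A *m ?B => let a := rows_of A in let b := rows_of B in constr:(rmul a b)
  | ?A ^+ ?k => let a := rows_of A in constr:(rpow a k)
  | ?A^T => let a := rows_of A in constr:(rtr a)
  | 1%:M => rid
  | 1 => rid
  | _ => let M' := eval red in M in rows_of M'
  end.

Ltac rows_seq_of s :=
  lazymatch s with
  | [::] => constr:(@nil rows)
  | ?M :: ?s' => let a := rows_of M in let r := rows_seq_of s' in constr:(a :: r)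
  | _ => let s' := eval red in s in rows_seq_of s'
  end.

Ltac mx4_compute :=
  lazymatch goal with |- ?X = ?Y =>
    let a := rows_of X in let b := rows_of Y in
    apply: (@mx4_transfer a b);
      [by rewrite ?mx4E_rows | by rewrite ?mx4E_rows | by vm_compute]
  end.

Lemma Cs_orthogonal : Cs^T *m Cs = 1%:M.
Proof. mx4_compute. Qed.

Lemma inSp4Z_left_inv g : inSp4Z g -> (Cs^T *m g^T *m Cs) *m g = 1%:M.
Proof. by move=> spg; rewrite -2!mulmxA (mulmxA g^T) spg Cs_orthogonal. Qed.

Lemma inSp4Z_unit g : inSp4Z g -> g \in unitmx.
Proof. by move/inSp4Z_left_inv/mulmx1_unit=> []. Qed.

Lemma inSp4Z_invmx g : inSp4Z g -> invmx g = Cs^T *m g^T *m Cs.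
Proof. by move/inSp4Z_left_inv/invmx_left. Qed.

Lemma inSp4Z1 : inSp4Z 1%:M.
Proof. by rewrite /inSp4Z trmx1 mul1mx mulmx1. Qed.

Lemma inSp4Z_mul g h : inSp4Z g -> inSp4Z h -> inSp4Z (g *m h).
Proof.
rewrite /inSp4Z trmx_mul => spg sph.
by rewrite !mulmxA -(mulmxA h^T g^T) -(mulmxA h^T) spg sph.
Qed.

Lemma inSp4Z_inv g : inSp4Z g -> inSp4Z (invmx g).
Proof.
move=> spg; have ug := inSp4Z_unit spg.
rewrite /inSp4Z -{1}spg !mulmxA -trmx_mul mulmxV // trmx1 mul1mx.
by rewrite -mulmxA mulmxV // mulmx1.
Qed.

Lemma gen_inSp4Z S g : {in S, forall s, inSp4Z s} -> gen S g -> inSp4Z g.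
Proof.
move=> spS; elim=> [|s /spS //|h k _ sph _ spk|h _ sph].
- exact: inSp4Z1.
- exact: inSp4Z_mul.
- exact: inSp4Z_inv.
Qed.

Definition Csr : rows := ltac:(let a := rows_of Cs in exact a).

Definition rsp (a : rows) : bool := rmul (rmul (rtr a) Csr) a == Csr.

Definition rinv (a : rows) : rows := rmul (rmul (rtr Csr) (rtr a)) Csr.

Lemma rspP a : rsp a -> inSp4Z (mx4 a).
Proof. by move/eqP=> e; rewrite /inSp4Z -mx4_tr -!mx4_mul e. Qed.

Lemma mx4_rinv a : inSp4Z (mx4 a) -> mx4 (rinv a) = invmx (mx4 a).
Proof. by move=> spa; rewrite inSp4Z_invmx // !mx4_mul !mx4_tr. Qed.

Definition rspan_step (gs s : seq rows) : seq rows :=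
  undup (s ++ [seq rmul x g | x <- s, g <- gs]).

Definition rspan (gs : seq rows) (k : nat) : seq rows := iter k (rspan_step gs) [:: rid].

Definition rgroup_closed (L : seq rows) : bool :=
  [&& rid \in L, all (fun a => all (fun b => rmul a b \in L) L) L
    & all (fun a => rinv a \in L) L].

Lemma gen_rspan gs k a : a \in rspan gs k -> gen (map mx4 gs) (mx4 a).
Proof.
elim: k a => [|k IHk] a /=.
  by rewrite inE => /eqP ->; rewrite mx4_rid; exact: gen_one.
rewrite mem_undup mem_cat => /orP[/IHk //|/allpairsP[[x g] [/= xL gs_g ->]]].
by rewrite mx4_mul; apply: gen_mul; [exact: IHk | apply: gen_in; exact: map_f].
Qed.

Lemma gen_rspanP gs k g :
  all rsp gs -> rgroup_closed (rspan gs k) -> all (mem (rspan gs k)) gs ->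
  gen (map mx4 gs) g <-> g \in map mx4 (rspan gs k).
Proof.
set L := rspan gs k => /allP sp_gs /and3P[idL /allP mulL /allP invL] /allP gsL.
have sp_gen h : gen (map mx4 gs) h -> inSp4Z h.
  by move=> gh; apply: gen_inSp4Z gh => _ /mapP[a /sp_gs/rspP spa ->].
split=> [|/mapP[a aL ->]]; last exact: gen_rspan aL.
elim=> [|s /mapP[a gs_a ->]|h1 h2 _ /mapP[a aL ->] _ /mapP[b bL ->]|h gh /mapP[a aL ah]].
- by rewrite -mx4_rid map_f.
- exact: map_f (gsL a gs_a).
- by rewrite -mx4_mul; exact: map_f (allP (mulL a aL) b bL).
- have spa : inSp4Z (mx4 a) by rewrite -ah; exact: sp_gen.
  by rewrite ah -mx4_rinv //; exact: map_f (invL a aL).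
Qed.

Definition rconj (a t : rows) : rows := rmul (rmul a t) (rinv a).

Lemma rconjP (P L : seq rows) M : {in P, forall a, inSp4Z (mx4 a)} ->
  (exists gam t, gam \in map mx4 P /\ t \in map mx4 L /\ M = gam *m t *m invmx gam) <->
  M \in map mx4 [seq rconj a t | a <- P, t <- L].
Proof.
move=> spP; split=> [[_ [_ [/mapP[a aP ->] [/mapP[t tL ->] ->]]]]|].
  by rewrite -(mx4_rinv (spP a aP)) -!mx4_mul; exact/map_f/allpairs_f.
case/mapP=> _ /allpairsP[[a t] [/= aP tL ->]] ->.
exists (mx4 a), (mx4 t); rewrite !map_f //; do 2!split=> //.
by rewrite /rconj mx4_mul (mx4_rinv (spP a aP)) mx4_mul.
Qed.

Definition rwith_inverses (L : seq rows) : seq rows := flatten [seq [:: t; rinv t] | t <- L].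

Lemma with_inverses_mx4 L : all rsp L ->
  with_inverses (map mx4 L) = map mx4 (rwith_inverses L).
Proof.
elim: L => //= t L IHL /andP[/rspP spt spL].
by rewrite (mx4_rinv spt) -IHL.
Qed.

Lemma uniq_map_mx4 L : all rows4 L -> uniq L -> uniq (map mx4 L).
Proof.
move=> /allP L4 uL; rewrite map_inj_in_uniq //.
by apply: (sub_in2 _ mx4_inj) => a /L4.
Qed.

Definition PR : seq rows := ltac:(let r := rows_seq_of Pgens in exact r).
Definition TR : seq rows := ltac:(let r := rows_seq_of Tgens in exact r).
Definition ABR : seq rows := ltac:(let r := rows_seq_of [:: mA; mB] in exact r).

Lemma Pgens_rows : Pgens = map mx4 PR. Proof. by []. Qed.
Lemma Tgens_rows : Tgens = map mx4 TR. Proof. by []. Qed.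
Lemma ABgens_rows : [:: mA; mB] = map mx4 ABR. Proof. by rewrite /= mx4_mul mx4_pow. Qed.

Lemma Dgens_inSp4Z g : g \in Dgens -> inSp4Z g.
Proof.
have /allP spD : all rsp (PR ++ TR) by vm_compute.
by rewrite /Dgens Pgens_rows Tgens_rows -map_cat => /mapP[a /spD/rspP spa ->].
Qed.

Lemma Pgens_inSp4Z g : g \in Pgens -> inSp4Z g.
Proof. by move=> gP; apply: Dgens_inSp4Z; rewrite mem_cat gP. Qed.

Lemma Tgens_inSp4Z g : g \in Tgens -> inSp4Z g.
Proof. by move=> gT; apply: Dgens_inSp4Z; rewrite mem_cat gT orbT. Qed.

Definition P32 : seq rows := rspan PR 4.

Lemma Pgen_P32 g : gen Pgens g <-> g \in map mx4 P32.
Proof. by rewrite Pgens_rows; apply: gen_rspanP; vm_compute. Qed.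

Lemma ABgen_P32 g : gen [:: mA; mB] g <-> g \in map mx4 P32.
Proof.
have /perm_map/perm_mem -> : perm_eq P32 (rspan ABR 7) by vm_compute.
by rewrite ABgens_rows; apply: gen_rspanP; vm_compute.
Qed.

Lemma P32_uniq : uniq (map mx4 P32).
Proof. by apply: uniq_map_mx4; vm_compute. Qed.

Lemma P32_size : size (map mx4 P32) = 32%N.
Proof. by rewrite size_map; vm_compute. Qed.

Lemma Tpm8_with_inverses : Tpm8 = with_inverses Tgens. Proof. by []. Qed.
Lemma Tpm4_with_inverses : Tpm4 = with_inverses (take 4 Tgens). Proof. by []. Qed.

Lemma Tpm8_rows : Tpm8 = map mx4 (rwith_inverses TR).
Proof. by rewrite Tpm8_with_inverses Tgens_rows with_inverses_mx4 //; vm_compute. Qed.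

Lemma Tpm4_rows : Tpm4 = map mx4 (rwith_inverses (take 4 TR)).
Proof.
by rewrite Tpm4_with_inverses Tgens_rows -map_take with_inverses_mx4 //; vm_compute.
Qed.

Lemma Tpm8_uniq : uniq Tpm8.
Proof. by rewrite Tpm8_rows; apply: uniq_map_mx4; vm_compute. Qed.

Lemma Pconj_Tpm4_Tpm8 M :
  (exists gam T, gen Pgens gam /\ T \in Tpm4 /\ M = gam *m T *m invmx gam) <-> M \in Tpm8.
Proof.
have spP a : a \in P32 -> inSp4Z (mx4 a).
  by move/(map_f mx4)/Pgen_P32; apply: gen_inSp4Z; exact: Pgens_inSp4Z.
have conjP : perm_eq (undup [seq rconj a t | a <- P32, t <- rwith_inverses (take 4 TR)])
                     (rwith_inverses TR) by vm_compute.
rewrite Tpm8_rows -(eq_mem_map mx4 (perm_mem conjP)) (eq_mem_map mx4 (mem_undup _)).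
rewrite Tpm4_rows; split=> [[gam [T [/Pgen_P32 Pgam rest]]]|].
  by apply/(rconjP _ _ spP); exists gam, T; split.
case/(rconjP _ _ spP)=> gam [T [Pgam rest]].
by exists gam, T; split; first exact/Pgen_P32.
Qed.

Lemma Pgen_normalizes_Tgen gam t :
  gen Pgens gam -> gen Tgens t -> gen Tgens (gam *m t *m invmx gam).
Proof.
have unitP h : gen Pgens h -> h \in unitmx.
  by move/(gen_inSp4Z Pgens_inSp4Z)/inSp4Z_unit.
move=> Pgam; apply: gen_conj; first exact: unitP.
  by move=> s /Tgens_inSp4Z/inSp4Z_unit.
move=> s /mem_with_inverses; rewrite -Tpm8_with_inverses.
(* s is itself a conjugate of some T in Tpm4, so its conjugate by gam is one by gam gam'. *)
case/Pconj_Tpm4_Tpm8=> gam' [T [Pgam' [T4 ->]]].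
rewrite -conjmxM ?unitP //; apply: gen_with_inverses; rewrite -Tpm8_with_inverses.
by apply/Pconj_Tpm4_Tpm8; exists (gam *m gam'), T; split=> //; exact: gen_mul.
Qed.

Theorem mainTheorem2 :
  (* all matrices lie in Sp(4,Z) *)
  (forall g, g \in Dgens -> inSp4Z g) /\
  (* (i) *)
  (exists s : seq M4, uniq s /\ size s = 32%N /\ (forall g, gen Pgens g <-> g \in s)) /\
  (forall g, gen Pgens g <-> gen [:: mA; mB] g) /\
  mA ^+ 8 = 1 /\ mB ^+ 4 = 1 /\ (mB *m mA) ^+ 4 = 1 /\
  (* (ii) *)
  uniq Tpm8 /\
  (forall M, (exists gam T, gen Pgens gam /\ T \in Tpm4 /\ M = gam *m T *m invmx gam)
             <-> M \in Tpm8) /\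
  (* (iii) *)
  (T1 *m T6) ^+ 6 = 1 /\ (T2 *m T8) ^+ 6 = 1 /\
  (T3 *m T7) ^+ 6 = 1 /\ (T4 *m T5) ^+ 6 = 1 /\
  (* (iv) *)
  (forall g, gen Dgens g -> inSp4Z g) /\
  (forall g, gen Dgens g -> exists gam t, gen Pgens gam /\ gen Tgens t /\ g = gam *m t) /\
  (forall g t, gen Dgens g -> gen Tgens t -> gen Tgens (g *m t *m invmx g)).
Proof.
have unitD : {in Pgens ++ Tgens, forall g, g \in unitmx}.
  by move=> g /Dgens_inSp4Z/inSp4Z_unit.
split; first exact: Dgens_inSp4Z.
split.
  exists (map mx4 P32); split; first exact: P32_uniq.
  by split; [exact: P32_size | move=> g; exact: Pgen_P32].
split; first by move=> g; split=> [/Pgen_P32/ABgen_P32 | /ABgen_P32/Pgen_P32].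
do 3 (split; first by mx4_compute).
split; first exact: Tpm8_uniq.
split; first exact: Pconj_Tpm4_Tpm8.
do 4 (split; first by mx4_compute).
split; first by move=> g; apply: gen_inSp4Z Dgens_inSp4Z.
split; first by move=> g /(gen_cat_decomp unitD Pgen_normalizes_Tgen).
by move=> g t /(gen_cat_normal unitD Pgen_normalizes_Tgen); apply.
Qed.
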